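(* Let $m\ge 1$ and let \[ A=\begin{pmatrix} D & p\\ q^{T} & \delta\end{pmatrix}\in\mathbb{C}^{(m+1)\times(m+1)}, \] where $D=\operatorname{diag}(d_1,\ldots,d_m)$, $p,q\in\mathbb{C}^m$, $\delta\in\mathbb{C}$, and suppose $A$ is similar to $\Lambda=\operatorname{diag}(\lambda_1,\ldots,\lambda_{m+1})$, where the numbers $d_1,\ldots,d_m,\lambda_1,\ldots,\lambda_{m+1}$ are pairwise distinct. Define \[ Z^{-1}=\begin{bmatrix}-\operatorname{diag}(p)\operatorname{Cauchy}(D,\Lambda)\\ \mathbf{ones}\end{bmatrix},\qquad \Pi=-\operatorname{Cauchy}(\Lambda,D)\operatorname{diag}(q)\operatorname{diag}(p)\operatorname{Cauchy}(D,\Lambda)+\mathbf{ones}, \] where in $Z^{-1}$ the symbol $\mathbf{ones}$ is the $1\times(m+1)$ row of ones and in $\Pi$ it is the $(m+1)\times(m+1)$ all-ones matrix. Then $\Pi$ is diagonal, with $\Pi_{ij}=0$ for $i\ne j$ and \[ \Pi_{jj}=1+\sum_{i=1}^m\frac{p_iq_i}{(\lambda_j-d_i)^2}=1-\sum_{i=1}^m\frac{\prod_{k=1}^{m+1}(d_i-\lambda_k)}{(\lambda_j-d_i)^2\prod_{k\ne i}(d_i-d_k)} \] (so $\Pi$ depends only on the $d_i$ and $\lambda_j$, not on $p,q$); the matrix $Z^{-1}$ is invertible with inverse \[ Z=\Pi^{-1}\bigl[\operatorname{Cauchy}(\Lambda,D)\operatorname{diag}(q),\ \mathbf{ones}\bigr]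 \] (here $\mathbf{ones}$ is the $(m+1)\times 1$ column of ones), and $A=Z^{-1}\Lambda Z$.
   Context: For diagonal matrices $D=\operatorname{diag}(d_1,\ldots,d_m)$ and $\Lambda=\operatorname{diag}(\lambda_1,\ldots,\lambda_{m+1})$ with $d_i\neq\lambda_j$, $\operatorname{Cauchy}(D,\Lambda)$ is the $m\times(m+1)$ matrix with entries $\operatorname{Cauchy}(D,\Lambda)_{ij}=(d_i-\lambda_j)^{-1}$, and $\operatorname{Cauchy}(\Lambda,D)$ is the $(m+1)\times m$ matrix with entries $(\lambda_i-d_j)^{-1}$. For a vector $v$, $\operatorname{diag}(v)$ is the diagonal matrix with diagonal $v$. $\mathbf{ones}$ denotes an array all of whose entries are $1$, of the shape indicated. *)

From HB Require Import structures.
From mathcomp Require Import all_boot all_order all_algebra.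
Set Implicit Arguments. Unset Strict Implicit. Unset Printing Implicit Defensive.
Import Order.TTheory GRing.Theory Num.Theory.
Local Open Scope ring_scope.

(* Cauchy(X, Y) for diagonal X = diag(x), Y = diag(y): entries (x_i - y_j)^-1 *)
Definition cauchy (F : fieldType) (a b : nat) (x : 'rV[F]_a) (y : 'rV[F]_b)
  : 'M[F]_(a, b) := \matrix_(i < a, j < b) (x 0 i - y 0 j)^-1.

Definition arrow_mx (F : fieldType) (m : nat) (d : 'rV[F]_m) (p q : 'cV[F]_m)
  (delta : F) : 'M[F]_(m + 1) :=
  block_mx (diag_mx d) p q^T delta%:M.

Definition Zinv_mx (F : fieldType) (m : nat) (d : 'rV[F]_m) (lam : 'rV[F]_(m + 1))
  (p : 'cV[F]_m) : 'M[F]_(m + 1) :=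
  col_mx (- (diag_mx p^T *m cauchy d lam)) (const_mx 1).

Definition Pi_mx (F : fieldType) (m : nat) (d : 'rV[F]_m) (lam : 'rV[F]_(m + 1))
  (p q : 'cV[F]_m) : 'M[F]_(m + 1) :=
  - (cauchy lam d *m diag_mx q^T *m diag_mx p^T *m cauchy d lam) + const_mx 1.

Definition Z_mx (F : fieldType) (m : nat) (d : 'rV[F]_m) (lam : 'rV[F]_(m + 1))
  (p q : 'cV[F]_m) : 'M[F]_(m + 1) :=
  invmx (Pi_mx d lam p q) *m row_mx (cauchy lam d *m diag_mx q^T) (const_mx 1).

(* Similarity to diag(lam) makes every lam_j an eigenvalue of the arrowhead
   matrix A, and a left eigenvector for lam_j yields the secular equation
   \sum_i p_i q_i / (lam_j - d_i) = lam_j - delta.  Granting it, the columns of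
   Z^-1 are right eigenvectors and the rows of
   Pi Z = [Cauchy(Lambda, D) diag(q), ones] are left eigenvectors of A for the
   distinct eigenvalues lam_j, so both are invertible; hence Pi = (Pi Z) Z^-1 is
   invertible, and diagonal because it commutes with diag(lam).  The closed form of Pi_jj comes from the residues of the
   secular function: multiplied by \prod_i (x - d_i) it becomes the monic
   polynomial \prod_k (x - lam_k), so p_i q_i \prod_(k != i) (d_i - d_k) =
   - \prod_k (d_i - lam_k). *)

From HB Require Import structures.
From mathcomp Require Import all_boot all_order all_algebra ring.
Set Implicit Arguments. Unset Strict Implicit. Unset Printing Implicit Defensive.
Import Order.TTheory GRing.Theory Num.Theory.
Local Open Scope ring_scope.

Section Eigenvectors.
Variables (F : fieldType) (n : nat).

Lemma unitmx_row_neq0 (P : 'M[F]_n) j : P \in unitmx -> row j P != 0.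
Proof.
move=> uP; apply/eqP => Pj0.
have : row j P *m invmx P = 0 by rewrite Pj0 mul0mx.
by rewrite rowE mulmxK // => /matrixP /(_ 0 j) /eqP; rewrite !mxE !eqxx oner_eq0.
Qed.

Lemma row_similar_diag_mx (P : 'M[F]_n) (a : 'rV[F]_n) j : P \in unitmx ->
  row j P *m (invmx P *m diag_mx a *m P) = a 0 j *: row j P.
Proof.
move=> uP; rewrite rowE !mulmxA mulmxK // -rowE row_diag_mx.
by rewrite -scalemxAl.
Qed.

(* The eigenspaces of g for the distinct a_j form a direct sum. *)
Lemma eigenrows_unitmx (g M : 'M[F]_n) (a : 'rV[F]_n) :
  injective (a 0) -> M *m g = diag_mx a *m M -> (forall j, row j M != 0) ->
  M \in unitmx.
Proof.
move=> inj_a Mg nzM.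
have Mj_eigen j : (row j M <= eigenspace g (a 0 j))%MS.
  by apply/eigenspaceP; rewrite -row_mul Mg row_mul row_diag_mx -scalemxAl -rowE.
apply: contraT; rewrite unitmxE unitfE negbK => /det0P[u nz_u uM0].
have [j uj0] : exists j, u 0 j != 0.
  apply/existsP; apply: contraR nz_u; rewrite negb_exists => /forallP u0.
  by apply/eqP/rowP => k; rewrite mxE; apply/eqP/negPn/u0.
have cap0 := mxdirect_sumsP (mxdirect_sum_eigenspace g (in2W inj_a)) j isT.
have uMj : u 0 j *: row j M = - \sum_(k | predT k && (k != j)) u 0 k *: row k M.
  by apply/eqP; rewrite -addr_eq0 -(bigD1 j (P := predT)) //= -mulmx_sum_row uM0.
suff : (u 0 j *: row j M <= (0 : 'M_n))%MS.
  by rewrite submx0 scaler_eq0 (negbTE uj0) (negbTE (nzM j)).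
rewrite -cap0 sub_capmx scalemx_sub //= uMj eqmx_opp.
by apply: summx_sub_sums => k _; rewrite scalemx_sub.
Qed.

End Eigenvectors.

Lemma diag_mx_comm_offdiag (R : idomainType) n (a : 'rV[R]_n) (M : 'M[R]_n) :
  injective (a 0) -> diag_mx a *m M = M *m diag_mx a ->
  forall i j, i != j -> M i j = 0.
Proof.
move=> inj_a /matrixP aM i j; apply: contraNeq => Mij0.
have /eqP := aM i j; rewrite mul_diag_mx mul_mx_diag !mxE mulrC -subr_eq0 -mulrBr.
by rewrite mulf_eq0 (negbTE Mij0) subr_eq0 => /eqP/inj_a->.
Qed.

Lemma row_mx_const1_row_neq0 (R : nzRingType) n k (X : 'M[R]_(n, k)) j :
  row j (row_mx X (const_mx 1 : 'M_(n, 1))) != 0.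
Proof.
apply/eqP => /matrixP /(_ 0 (rshift k 0)) /eqP.
by rewrite !mxE (unsplitK (inr _)) mxE oner_eq0.
Qed.

Lemma size_monicB_leq (R : nzRingType) n (p r : {poly R}) :
  p \is monic -> r \is monic -> size p = n.+1 -> size r = n.+1 ->
  (size (p - r)%R <= n)%N.
Proof.
move=> /monicP p1 /monicP r1 sp sr; apply/leq_sizeP => i; rewrite coefB.
rewrite leq_eqVlt => /predU1P[<- | lt_ni].
  by move: p1 r1; rewrite !lead_coefE sp sr => -> ->; rewrite subrr.
by rewrite !nth_default ?subrr ?sp ?sr.
Qed.

Lemma size_prod_XsubC_ord (R : nzRingType) n (e : 'I_n -> R) :
  size (\prod_(k < n) ('X - (e k)%:P)) = n.+1.
Proof. by rewrite size_prod_XsubC [index_enum _]unlock -enumT size_enum_ord. Qed.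

Lemma horner_prod_XsubC (R : comNzRingType) (I : finType) (P : pred I)
    (e : I -> R) x :
  (\prod_(k | P k) ('X - (e k)%:P)).[x] = \prod_(k | P k) (x - e k).
Proof. by rewrite horner_prod; apply: eq_bigr => k _; rewrite hornerXsubC. Qed.

Section SecularResidues.
Variables (F : fieldType) (m : nat) (d : 'rV[F]_m) (lam : 'rV[F]_(m + 1)).
Variables (c : 'I_m -> F) (delta : F).
Hypothesis lam_inj : injective (lam 0).
Hypothesis d_neq_lam : forall i j, d 0 i != lam 0 j.
Hypothesis secular : forall j, \sum_i c i / (lam 0 j - d 0 i) = lam 0 j - delta.

Local Notation Pd := (\prod_(k < m) ('X - (d 0 k)%:P)).
Local Notation Pd_except i := (\prod_(k < m | k != i) ('X - (d 0 k)%:P)).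
Local Notation Plam := (\prod_(k < m + 1) ('X - (lam 0 k)%:P)).

(* Pd times the secular function [x - delta - \sum_i c_i / (x - d_i)] is a
   monic polynomial of degree m + 1 vanishing at the m + 1 distinct lam_j. *)
Lemma secular_poly_eq : ('X - delta%:P) * Pd - \sum_i c i *: Pd_except i = Plam.
Proof.
have size_Pd_except i : size (Pd_except i) = m.
  have := size_prod_XsubC_ord (d 0); rewrite (bigD1 i) //=.
  rewrite size_monicM ?monicXsubC ?monic_neq0 ?monic_prod_XsubC //.
  by rewrite size_XsubC => -[].
have size_lhs :
    (size (('X - delta%:P) * Pd - \sum_i c i *: Pd_except i - Plam)%R <= m.+1)%N.
  rewrite addrAC; apply: leq_trans (size_polyD _ _) _; rewrite size_polyN geq_max.
  apply/andP; split.
    apply: size_monicB_leq; rewrite ?monicMl ?monicXsubC ?monic_prod_XsubC //.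
      by rewrite size_monicM ?monicXsubC ?monic_neq0 ?monic_prod_XsubC
                 // size_XsubC size_prod_XsubC_ord.
    by rewrite size_prod_XsubC_ord addn1.
  apply: leq_trans (size_sum _ _ _) _; apply/bigmax_leqP => i _.
  by apply: leq_trans (size_scale_leq _ _) _; rewrite size_Pd_except.
apply/eqP; rewrite -subr_eq0; apply/eqP.
apply: (roots_geq_poly_eq0 (rs := [seq lam 0 j | j <- enum 'I_(m + 1)])).
- apply/allP => _ /mapP[j _ ->]; rewrite rootE !hornerE horner_sum.
  rewrite !horner_prod_XsubC (bigD1 j) //= subrr mul0r subr0.
  have except_at i : \prod_(k < m | k != i) (lam 0 j - d 0 k) =
                     \prod_(k < m) (lam 0 j - d 0 k) / (lam 0 j - d 0 i).
    by rewrite [in RHS](bigD1 i) //= mulrC mulKf // subr_eq0 eq_sym d_neq_lam.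
  under [X in _ - X]eq_bigr => i _ do
    rewrite hornerZ horner_prod_XsubC except_at mulrA mulrAC.
  by rewrite -mulr_suml secular mulrC subrr.
- by rewrite map_inj_uniq ?enum_uniq.
- by rewrite size_map size_enum_ord (leq_trans size_lhs) ?addn1.
Qed.

Lemma secular_residue i : c i * \prod_(k < m | k != i) (d 0 i - d 0 k) =
                          - \prod_(k < m + 1) (d 0 i - lam 0 k).
Proof.
have vanish_at_di (P : pred 'I_m) : P i -> \prod_(k | P k) (d 0 i - d 0 k) = 0.
  by move=> Pi; rewrite (bigD1 i) //= subrr mul0r.
have := congr1 (horner^~ (d 0 i)) secular_poly_eq.
rewrite /= !hornerE horner_sum !horner_prod_XsubC vanish_at_di // mulr0 sub0r.
rewrite [\sum_(k < m) _](bigD1 i) //= [\sum_(k < m | k != i) _]big1 => [|k ki].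
  by rewrite addr0 hornerZ horner_prod_XsubC => <-; rewrite opprK.
by rewrite hornerZ horner_prod_XsubC vanish_at_di ?mulr0 // eq_sym.
Qed.

End SecularResidues.

Section Arrowhead.
Variables (F : fieldType) (m : nat) (d : 'rV[F]_m) (lam : 'rV[F]_(m + 1)).
Variables (p q : 'cV[F]_m) (delta : F).
Local Notation A := (arrow_mx d p q delta).

(* A left eigenvector [x, t] of A for an eigenvalue a outside the d_i has
   x_i = t q_i / (a - d_i); the last column of the eigen-equation then reads
   as the secular equation. *)
Lemma arrow_eigen_secular a (v : 'rV[F]_(m + 1)) :
  (forall i, d 0 i != a) -> v != 0 -> v *m A = a *: v ->
  \sum_i p i 0 * q i 0 / (a - d 0 i) = a - delta.
Proof.
move=> d_neq_a; rewrite -(hsubmxK v); move: (lsubmx v) (rsubmx v) => x t nz_xt.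
rewrite /arrow_mx mul_row_block scale_row_mx mul_mx_diag.
move=> /eq_row_mx[/rowP ex /rowP et].
have x_val i : x 0 i = t 0 0 * q i 0 / (a - d 0 i).
  have a_d_neq0 : a - d 0 i != 0 by rewrite subr_eq0 eq_sym d_neq_a.
  apply: (canRL (mulfK a_d_neq0)); move: (ex i).
  rewrite !mxE big_ord1 !mxE -[ord0]/(0 : 'I_1) => ex_i.
  by rewrite mulrBr [x 0 i * a]mulrC -ex_i; ring.
have t_eq : t 0 0 * (a - delta) = \sum_i x 0 i * p i 0.
  move: (et 0); rewrite !mxE big_ord1 !mxE mulr1n -[ord0]/(0 : 'I_1) => et0.
  by rewrite mulrBr [t 0 0 * a]mulrC -et0; ring.
have nz_t : t 0 0 != 0.
  apply: contraNneq nz_xt => t0; apply/eqP.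
  have -> : t = 0 by apply/rowP => k; rewrite ord1 t0 mxE.
  have -> : x = 0 by apply/rowP => i; rewrite x_val t0 !mul0r mxE.
  by rewrite row_mx0.
apply: (mulfI nz_t); rewrite t_eq mulr_sumr.
by apply: eq_bigr => i _; rewrite x_val; ring.
Qed.

Hypothesis d_neq_lam : forall i j, d 0 i != lam 0 j.

Lemma arrow_similar_secular :
  (exists P : 'M[F]_(m + 1), P \in unitmx /\ A = invmx P *m diag_mx lam *m P) ->
  forall j, \sum_i p i 0 * q i 0 / (lam 0 j - d 0 i) = lam 0 j - delta.
Proof.
move=> [P [uP hA]] j.
apply: (arrow_eigen_secular (v := row j P)) => [i | | ].
- exact: d_neq_lam.
- exact: unitmx_row_neq0.
- by rewrite hA row_similar_diag_mx.
Qed.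

Hypothesis secular :
  forall j, \sum_i p i 0 * q i 0 / (lam 0 j - d 0 i) = lam 0 j - delta.

Definition PiZ_mx : 'M[F]_(m + 1) :=
  row_mx (cauchy lam d *m diag_mx q^T) (const_mx 1).

Local Notation Zinv := (Zinv_mx d lam p).
Local Notation Pi := (Pi_mx d lam p q).

(* In both products the last row (resp. column) is the secular equation. *)
Lemma arrow_mulmx_Zinv : A *m Zinv = Zinv *m diag_mx lam.
Proof.
rewrite /arrow_mx /Zinv_mx mul_block_col mul_col_mx mulmxN.
rewrite !mul_diag_mx !mul_mx_diag.
congr col_mx; apply/matrixP => i j; rewrite !mxE.
  rewrite big_ord1 !mxE -?[ord0]/(0 : 'I_1).
  have d_lam_neq0 : d 0 i - lam 0 j != 0 by rewrite subr_eq0 d_neq_lam.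
  by field.
rewrite (ord1 i) big_ord1 !mxE eqxx mulr1n mulr1 mul1r.
rewrite -(addrNK delta (lam 0 j)) -secular; congr (_ + _).
apply: eq_bigr => k _.
by rewrite !mxE -[d 0 k - _]opprB invrN; ring.
Qed.

Lemma PiZ_mulmx_arrow : PiZ_mx *m A = diag_mx lam *m PiZ_mx.
Proof.
rewrite /arrow_mx /PiZ_mx mul_row_block mul_mx_row !mul_diag_mx !mul_mx_diag.
congr row_mx; apply/matrixP => i j; rewrite !mxE.
  rewrite big_ord1 !mxE -?[ord0]/(0 : 'I_1).
  have lam_d_neq0 : lam 0 i - d 0 j != 0 by rewrite subr_eq0 eq_sym d_neq_lam.
  by field.
rewrite (ord1 j) big_ord1 !mxE eqxx mulr1n mulr1 mul1r.
rewrite -(addrNK delta (lam 0 i)) -secular; congr (_ + _).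
by apply: eq_bigr => k _; rewrite !mxE; ring.
Qed.

Lemma PiZ_mulmx_Zinv : PiZ_mx *m Zinv = Pi.
Proof.
rewrite /PiZ_mx /Zinv_mx /Pi_mx mul_row_col mulmxN !mulmxA.
by congr (_ + _); apply/matrixP => i j; rewrite !mxE big_ord1 !mxE mulr1.
Qed.

Lemma Pi_mx_entry i j : Pi i j =
  1 + \sum_k p k 0 * q k 0 / ((lam 0 i - d 0 k) * (lam 0 j - d 0 k)).
Proof.
rewrite /Pi_mx !mul_mx_diag !mxE addrC; congr (_ + _).
rewrite -sumrN; apply: eq_bigr => k _.
by rewrite !mxE -[d 0 k - lam 0 j]opprB invrN invfM; ring.
Qed.

Lemma Pi_mx_diag j :
  Pi j j = 1 + \sum_i p i 0 * q i 0 / (lam 0 j - d 0 i) ^+ 2.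
Proof. by rewrite Pi_mx_entry; under eq_bigr do rewrite -expr2. Qed.

Hypothesis lam_inj : injective (lam 0).

Lemma Zinv_mx_unit : Zinv \in unitmx.
Proof.
rewrite -unitmx_tr; apply: (eigenrows_unitmx (g := A^T) lam_inj).
  by rewrite -trmx_mul arrow_mulmx_Zinv trmx_mul tr_diag_mx.
by move=> j; rewrite /Zinv_mx tr_col_mx trmx_const row_mx_const1_row_neq0.
Qed.

Lemma PiZ_mx_unit : PiZ_mx \in unitmx.
Proof.
apply: (eigenrows_unitmx lam_inj PiZ_mulmx_arrow) => j.
exact: row_mx_const1_row_neq0.
Qed.

Lemma Pi_mx_unit : Pi \in unitmx.
Proof. by rewrite -PiZ_mulmx_Zinv unitmx_mul PiZ_mx_unit Zinv_mx_unit. Qed.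

Lemma Pi_mx_offdiag i j : i != j -> Pi i j = 0.
Proof.
apply: diag_mx_comm_offdiag lam_inj _ i j.
by rewrite -PiZ_mulmx_Zinv mulmxA -PiZ_mulmx_arrow -!mulmxA arrow_mulmx_Zinv.
Qed.

Lemma invmx_Zinv_mx : invmx Zinv = Z_mx d lam p q.
Proof.
have Z_Zinv : Z_mx d lam p q *m Zinv = 1%:M.
  by rewrite /Z_mx -mulmxA PiZ_mulmx_Zinv mulVmx ?Pi_mx_unit.
by rewrite -[invmx Zinv]mul1mx -Z_Zinv mulmxK ?Zinv_mx_unit.
Qed.

Lemma arrow_mx_diagonalized : A = Zinv *m diag_mx lam *m Z_mx d lam p q.
Proof. by rewrite -invmx_Zinv_mx -arrow_mulmx_Zinv mulmxK ?Zinv_mx_unit. Qed.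

Hypothesis d_inj : injective (d 0).

Lemma Pi_mx_diag_prod j :
  Pi j j = 1 - \sum_i (\prod_(k < m + 1) (d 0 i - lam 0 k))
                / ((lam 0 j - d 0 i) ^+ 2 * \prod_(k < m | k != i) (d 0 i - d 0 k)).
Proof.
rewrite Pi_mx_diag -sumrN; congr (1 + _); apply: eq_bigr => i _.
have := secular_residue (c := fun i => p i 0 * q i 0) lam_inj d_neq_lam secular i.
rewrite -mulNr => <-.
have prod_neq0 : \prod_(k < m | k != i) (d 0 i - d 0 k) != 0.
  by apply/prodf_neq0 => k ki; rewrite subr_eq0 (inj_eq d_inj) eq_sym.
have lam_d_neq0 : lam 0 j - d 0 i != 0 by rewrite subr_eq0 eq_sym d_neq_lam.
by field; rewrite prod_neq0 lam_d_neq0.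
Qed.

End Arrowhead.

Theorem mainTheorem2 (C : numClosedFieldType) (m : nat) (hm : (0 < m)%N)
  (d : 'rV[C]_m) (lam : 'rV[C]_(m + 1)) (p q : 'cV[C]_m) (delta : C)
  (hd : injective (fun i : 'I_m => d 0 i))
  (hlam : injective (fun j : 'I_(m + 1) => lam 0 j))
  (hdlam : forall (i : 'I_m) (j : 'I_(m + 1)), d 0 i != lam 0 j)
  (hsim : exists P : 'M[C]_(m + 1),
            P \in unitmx /\ arrow_mx d p q delta = invmx P *m diag_mx lam *m P) :
  let Pi := Pi_mx d lam p q in
  let Zinv := Zinv_mx d lam p in
  let Z := Z_mx d lam p q in
  [/\ (forall i j : 'I_(m + 1), i != j -> Pi i j = 0),
      (forall j : 'I_(m + 1),
         Pi j j = 1 + \sum_(i < m) p i 0 * q i 0 / (lam 0 j - d 0 i) ^+ 2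
         /\ Pi j j = 1 - \sum_(i < m)
              (\prod_(k < m + 1) (d 0 i - lam 0 k))
              / ((lam 0 j - d 0 i) ^+ 2 * \prod_(k < m | k != i) (d 0 i - d 0 k))),
      Pi \in unitmx,
      Zinv \in unitmx /\ invmx Zinv = Z
    & arrow_mx d p q delta = Zinv *m diag_mx lam *m Z].
Proof.
move=> Pi Zinv Z.
have secular := arrow_similar_secular hdlam hsim.
split.
- exact: Pi_mx_offdiag hdlam secular hlam.
- move=> j; split; first exact: Pi_mx_diag.
  exact: (Pi_mx_diag_prod hdlam secular hlam hd j).
- exact: Pi_mx_unit hdlam secular hlam.
- split; first exact: Zinv_mx_unit hdlam secular hlam.
  exact: invmx_Zinv_mx hdlam secular hlam.
- exact: arrow_mx_diagonalized hdlam secular hlam.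
Qed.
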